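(* Let $m\ge1$ be an integer. Then $\big[N,\frac im\log L^m\big]=-i\mathbf1$ on $\ell^2_m\cap\mathrm D(N\log L^m)\cap\mathrm D(\log(L^m)N)$, and this subspace is infinite-dimensional.
   Context: $\ell^2=\ell^2(\mathbb N)$, $\mathbb N=\{0,1,\dots\}$, basis $(\xi_n)$; $N\xi_n=n\xi_n$ (self-adjoint, maximal domain); $L$ left shift ($L\xi_n=\xi_{n-1}$, $L\xi_0=0$). For a linear operator $A$, $\mathrm D(\log A)=\{f\in\bigcap_{k\ge0}\mathrm D(A^k):\lim_K\sum_{k=1}^K\frac1k(\mathbf1-A)^kf\text{ exists}\}$, $\log Af=-\sum_{k\ge1}\frac1k(\mathbf1-A)^kf$. $\ell^2_m=\{\varphi\in\ell^2:\lim_{k\to\infty}(\mathbf1-L^m)^k\varphi=0\}$. Commutators $[A,B]=AB-BA$ on $\mathrm D(AB)\cap\mathrm D(BA)$. *)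

From Stdlib Require Import Reals.
From Coquelicot Require Import Coquelicot.
Open Scope R_scope.

(* Sequences indexed by N = {0,1,...}; phi n is the coefficient on xi_n. *)
Definition seqC := nat -> C.

Definition l2 (f : seqC) : Prop := ex_series (fun n => (Cmod (f n)) ^ 2).

(* Squared l^2 norm (meaningful for f in l^2). *)
Definition l2norm2 (f : seqC) : R := Series (fun n => (Cmod (f n)) ^ 2).

Definition l2conv (u : nat -> seqC) (g : seqC) : Prop :=
  l2 g /\ (forall K, l2 (u K)) /\
  is_lim_seq (fun K => l2norm2 (fun n => Cminus (u K n) (g n))) 0.

Record op := Op { dom : seqC -> Prop; app : seqC -> seqC }.

Definition idop : op := Op l2 (fun f => f).

Definition ocomp (A B : op) : op :=
  Op (fun f => dom B f /\ dom A (app B f)) (fun f => app A (app B f)).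

Definition osub (A B : op) : op :=
  Op (fun f => dom A f /\ dom B f) (fun f n => Cminus (app A f n) (app B f n)).

Definition oscal (c : C) (A : op) : op :=
  Op (dom A) (fun f n => Cmult c (app A f n)).

Fixpoint opow (A : op) (k : nat) : op :=
  match k with
  | O => idop
  | S k' => ocomp A (opow A k')
  end.

Definition comm (A B : op) : op := osub (ocomp A B) (ocomp B A).

Fixpoint csum (d : nat) (f : nat -> C) : C :=
  match d with
  | O => RtoC 0
  | S d' => Cplus (csum d' f) (f d')
  end.

Definition logpsum (A : op) (f : seqC) (K : nat) : seqC :=
  fun n => csum (S K) (fun k =>
    match k with
    | O => RtoC 0
    | S _ => Cmult (RtoC (/ INR k)) (app (opow (osub idop A) k) f n)
    end).

Definition logdom (A : op) (f : seqC) : Prop :=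
  (forall k, dom (opow A k) f) /\ exists g, l2conv (logpsum A f) g.

(* log A f = - sum_{k>=1} (1/k)(1-A)^k f.  On D(log A) the l^2 limit exists,
   so it coincides with the coordinatewise limit used here. *)
Definition logop (A : op) : op :=
  Op (logdom A)
     (fun f n => Copp (real (Lim_seq (fun K => Re (logpsum A f K n))),
                       real (Lim_seq (fun K => Im (logpsum A f K n))))).

(* Left shift: L xi_n = xi_{n-1}, L xi_0 = 0, i.e. (L f)_n = f_{n+1}. *)
Definition Lop : op := Op l2 (fun f n => f (S n)).

Definition Nop : op :=
  Op (fun f => l2 f /\ l2 (fun n => Cmult (RtoC (INR n)) (f n)))
     (fun f n => Cmult (RtoC (INR n)) (f n)).

Definition l2m (m : nat) (phi : seqC) : Prop :=
  l2 phi /\ l2conv (fun k => app (opow (osub idop (opow Lop m)) k) phi) (fun _ => RtoC 0).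

Definition Sm (m : nat) (phi : seqC) : Prop :=
  l2m m phi /\ dom (ocomp Nop (logop (opow Lop m))) phi
            /\ dom (ocomp (logop (opow Lop m)) Nop) phi.

Definition infinite_dimensional (S : seqC -> Prop) : Prop :=
  forall d : nat, exists v : nat -> seqC,
    (forall j, (j < d)%nat -> S (v j)) /\
    (forall c : nat -> C,
        (forall n, csum d (fun j => Cmult (c j) (v j n)) = RtoC 0) ->
        forall j, (j < d)%nat -> c j = RtoC 0).

From Stdlib Require Import Reals Lra Lia FunctionalExtensionality.
From Coquelicot Require Import Coquelicot.
Open Scope R_scope.

(* Write T = 1 - L^m, so that (T f)_n = f_n - f_(n+m).  From N L^m - L^m N = -m L^m one gets
   [N, T^k] = k m T^(k-1) L^m = k m (T^(k-1) - T^k), so the commutator of N with the partial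
   sum sum_(k=1..K) T^k / k telescopes to m (1 - T^K).  On l^2_m the term T^K phi tends to 0,
   hence [N, log L^m] phi = -m phi, and scaling by i/m gives the first claim.
   Every geometric sequence (q^n)_n with 0 < q < 1/2 is an eigenvector of L^m with eigenvalue
   q^m in (0,1); there all the series above become scalar series that converge, so these
   sequences lie in the subspace, and those with distinct ratios are linearly independent
   (Vandermonde). *)

Lemma ex_series_scalR (c : R) (a : nat -> R) :
  ex_series a -> ex_series (fun n => c * a n).
Proof. exact (ex_series_scal_l (V := R_NormedModule) c a). Qed.

Lemma ex_series_plusR (a b : nat -> R) :
  ex_series a -> ex_series b -> ex_series (fun n => a n + b n).
Proof. exact (ex_series_plus (V := R_NormedModule) a b). Qed.

Lemma ex_series_extR (a b : nat -> R) :
  (forall n, a n = b n) -> ex_series a -> ex_series b.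
Proof. exact (ex_series_ext (V := R_NormedModule) a b). Qed.

Lemma ex_series_le_nonneg (a b : nat -> R) :
  (forall n, 0 <= a n <= b n) -> ex_series b -> ex_series a.
Proof.
  intros Hab Hb. apply (ex_series_le a b); [|exact Hb].
  intros n. specialize (Hab n). change (Rabs (a n) <= b n).
  rewrite Rabs_pos_eq; lra.
Qed.

Lemma sum_n_ge_term (a : nat -> R) k :
  (forall n, 0 <= a n) -> a k <= sum_n a k.
Proof.
  intros Ha. induction k as [|k IH].
  - rewrite sum_O. lra.
  - rewrite sum_Sn. change (a (S k) <= sum_n a k + a (S k)).
    pose proof (Ha k). lra.
Qed.

Lemma Series_ge_term (a : nat -> R) k :
  ex_series a -> (forall n, 0 <= a n) -> a k <= Series a.
Proof.
  intros Hs Ha. eapply Rle_trans; [apply sum_n_ge_term, Ha|].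
  apply is_lim_seq_incr_compare; [apply Series_correct, Hs|].
  intros n. rewrite sum_Sn. change (sum_n a n <= sum_n a n + a (S n)).
  pose proof (Ha (S n)). lra.
Qed.

Lemma Cmod_plus_sq (x y : C) :
  Cmod (Cplus x y) ^ 2 <= 2 * Cmod x ^ 2 + 2 * Cmod y ^ 2.
Proof.
  pose proof (Cmod_triangle x y). pose proof (Cmod_ge_0 (Cplus x y)).
  apply Rle_trans with ((Cmod x + Cmod y) ^ 2).
  - apply pow_incr. lra.
  - pose proof (pow2_ge_0 (Cmod x - Cmod y)). simpl in *. nra.
Qed.

Lemma Cmod_minus_sq (x y : C) :
  Cmod (Cminus x y) ^ 2 <= 2 * Cmod x ^ 2 + 2 * Cmod y ^ 2.
Proof. rewrite <- (Cmod_opp y). apply Cmod_plus_sq. Qed.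

Lemma Cmod_ge_abs_Re_Im (c : C) : Rabs (Re c) <= Cmod c /\ Rabs (Im c) <= Cmod c.
Proof.
  rewrite <- (Rabs_pos_eq (Cmod c)) by apply Cmod_ge_0.
  apply triangle_rectangle_le. rewrite Rsqr_pow2, Rsqr_pow2, Rsqr_pow2, Cmod2_alt.
  apply Rle_refl.
Qed.

Lemma l2_ext (f g : seqC) : (forall n, f n = g n) -> l2 f -> l2 g.
Proof. intros H. replace g with f; [easy|]. now apply functional_extensionality. Qed.

Lemma l2_scal (c : C) (f : seqC) : l2 f -> l2 (fun n => Cmult c (f n)).
Proof.
  intros Hf. apply ex_series_extR with (fun n => Cmod c ^ 2 * Cmod (f n) ^ 2).
  - intros n. rewrite Cmod_mult. ring.
  - now apply ex_series_scalR.
Qed.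

Lemma l2_plus (f g : seqC) : l2 f -> l2 g -> l2 (fun n => Cplus (f n) (g n)).
Proof.
  intros Hf Hg.
  apply ex_series_le_nonneg with (fun n => 2 * Cmod (f n) ^ 2 + 2 * Cmod (g n) ^ 2).
  - intros n. split; [apply pow2_ge_0 | apply Cmod_plus_sq].
  - apply ex_series_plusR; now apply ex_series_scalR.
Qed.

Lemma l2_minus (f g : seqC) : l2 f -> l2 g -> l2 (fun n => Cminus (f n) (g n)).
Proof.
  intros Hf Hg.
  apply ex_series_le_nonneg with (fun n => 2 * Cmod (f n) ^ 2 + 2 * Cmod (g n) ^ 2).
  - intros n. split; [apply pow2_ge_0 | apply Cmod_minus_sq].
  - apply ex_series_plusR; now apply ex_series_scalR.
Qed.

Lemma l2norm2_ge_term (f : seqC) n : l2 f -> Cmod (f n) ^ 2 <= l2norm2 f.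
Proof.
  intros Hf. apply (Series_ge_term (fun j => Cmod (f j) ^ 2)); [exact Hf|].
  intros j. apply pow2_ge_0.
Qed.

Lemma l2conv_comb2 (f h : seqC) (a b : nat -> R) (al bl : R) (u : nat -> seqC) (g : seqC) :
  l2 f -> l2 h -> is_lim_seq a al -> is_lim_seq b bl ->
  (forall K n, u K n = Cplus (Cmult (RtoC (a K)) (f n)) (Cmult (RtoC (b K)) (h n))) ->
  (forall n, g n = Cplus (Cmult (RtoC al) (f n)) (Cmult (RtoC bl) (h n))) ->
  l2conv u g.
Proof.
  intros Hf Hh Ha Hb Hu Hg.
  assert (Hcomb : forall x y, l2 (fun n => Cplus (Cmult (RtoC x) (f n)) (Cmult (RtoC y) (h n))))
    by (intros; apply l2_plus; now apply l2_scal).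
  split; [|split].
  - apply (l2_ext _ _ (fun n => eq_sym (Hg n))), Hcomb.
  - intros K. apply (l2_ext _ _ (fun n => eq_sym (Hu K n))), Hcomb.
  - set (S1 := l2norm2 f). set (S2 := l2norm2 h).
    apply is_lim_seq_le_le with (fun _ => 0)
      (fun K => 2 * ((a K - al) * (a K - al)) * S1 + 2 * ((b K - bl) * (b K - bl)) * S2).
    + intros K. split.
      { eapply Rle_trans; [apply pow2_ge_0 | apply (l2norm2_ge_term _ 0), l2_minus].
        - apply (l2_ext _ _ (fun n => eq_sym (Hu K n))), Hcomb.
        - apply (l2_ext _ _ (fun n => eq_sym (Hg n))), Hcomb. }
      unfold S1, S2, l2norm2.
      rewrite <- !Series_scal_l, <- Series_plus by (apply ex_series_scalR; assumption).
      apply Series_le; [|apply ex_series_plusR; apply ex_series_scalR; assumption].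
      intros n. split; [apply pow2_ge_0|].
      rewrite Hu, Hg.
      replace (Cminus (Cplus (Cmult (RtoC (a K)) (f n)) (Cmult (RtoC (b K)) (h n)))
                      (Cplus (Cmult (RtoC al) (f n)) (Cmult (RtoC bl) (h n))))
        with (Cplus (Cmult (RtoC (a K - al)) (f n)) (Cmult (RtoC (b K - bl)) (h n)))
        by (rewrite !RtoC_minus; ring).
      eapply Rle_trans; [apply Cmod_plus_sq|].
      rewrite !Cmod_mult, !Cmod_R, !Rpow_mult_distr, !pow2_abs. simpl. lra.
    + apply is_lim_seq_const.
    + assert (Ha0 : is_lim_seq (fun K => a K - al) 0).
      { rewrite <- (Rminus_diag_eq al al) by reflexivity.
        apply is_lim_seq_minus'; [exact Ha | apply is_lim_seq_const]. }
      assert (Hb0 : is_lim_seq (fun K => b K - bl) 0).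
      { rewrite <- (Rminus_diag_eq bl bl) by reflexivity.
        apply is_lim_seq_minus'; [exact Hb | apply is_lim_seq_const]. }
      replace (Finite 0) with (Finite (2 * (0 * 0) * S1 + 2 * (0 * 0) * S2)) by (f_equal; ring).
      apply is_lim_seq_plus'; apply is_lim_seq_mult'; try apply is_lim_seq_const;
        apply is_lim_seq_mult'; try apply is_lim_seq_const; apply is_lim_seq_mult'; assumption.
Qed.

Definition is_lim_seqC (u : nat -> C) (l : C) : Prop :=
  is_lim_seq (fun K => Re (u K)) (Re l) /\ is_lim_seq (fun K => Im (u K)) (Im l).

Lemma is_lim_seq_dist_le (x e : nat -> R) (X : R) :
  (forall K, Rabs (x K - X) <= e K) -> is_lim_seq e 0 -> is_lim_seq x X.
Proof.
  intros Hx He.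
  apply is_lim_seq_le_le with (fun K => X - e K) (fun K => X + e K).
  - intros K. specialize (Hx K). apply Rabs_le_between' in Hx. lra.
  - pose proof (is_lim_seq_minus' _ _ X 0 (is_lim_seq_const X) He) as H.
    now rewrite Rminus_0_r in H.
  - pose proof (is_lim_seq_plus' _ _ X 0 (is_lim_seq_const X) He) as H.
    now rewrite Rplus_0_r in H.
Qed.

Lemma l2conv_coord (u : nat -> seqC) (g : seqC) n :
  l2conv u g -> is_lim_seqC (fun K => u K n) (g n).
Proof.
  intros [Hg [Hu Hlim]].
  set (d := fun K => Cmod (Cminus (u K n) (g n))).
  assert (Hd2 : is_lim_seq (fun K => d K ^ 2) 0).
  { apply is_lim_seq_le_le with (fun _ => 0)
      (fun K => l2norm2 (fun j => Cminus (u K j) (g j))); [|apply is_lim_seq_const|exact Hlim].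
    intros K. split; [apply pow2_ge_0|].
    apply (l2norm2_ge_term (fun j => Cminus (u K j) (g j))), l2_minus; auto. }
  assert (Hd : is_lim_seq d 0).
  { apply is_lim_seq_ext with (fun K => sqrt (d K ^ 2)).
    - intros K. apply sqrt_pow2, Cmod_ge_0.
    - rewrite <- sqrt_0. apply is_lim_seq_continuous; [apply continuity_pt_sqrt; lra | exact Hd2]. }
  split; apply is_lim_seq_dist_le with d; try exact Hd; intros K;
    apply (Cmod_ge_abs_Re_Im (Cminus (u K n) (g n))).
Qed.

Lemma logop_app (A : op) (f g : seqC) n :
  l2conv (logpsum A f) g -> app (logop A) f n = Copp (g n).
Proof.
  intros H. destruct (l2conv_coord _ _ n H) as [HRe HIm]. unfold logop; cbn [app].
  rewrite (is_lim_seq_unique _ _ HRe), (is_lim_seq_unique _ _ HIm). simpl.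
  now destruct (g n).
Qed.

Lemma is_lim_seq_relation (x y t : nat -> R) (X Y p a b : R) :
  is_lim_seq x X -> is_lim_seq y Y -> is_lim_seq t 0 ->
  (forall K, a * x K - y K = b * (p - t K)) -> a * X - Y = b * p.
Proof.
  intros Hx Hy Ht H.
  pose proof (is_lim_seq_minus' _ _ _ _ (is_lim_seq_scal_l _ a _ Hx) Hy) as L1.
  pose proof (is_lim_seq_scal_l _ b _ (is_lim_seq_minus' _ _ p 0 (is_lim_seq_const p) Ht)) as L2.
  apply (is_lim_seq_ext _ (fun K => a * x K - y K)) in L2; [|intros K; now rewrite H].
  apply is_lim_seq_unique in L1, L2. rewrite L1 in L2. injection L2. lra.
Qed.

Lemma is_lim_seqC_relation (x y t : nat -> C) (X Y p : C) (a b : R) :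
  is_lim_seqC x X -> is_lim_seqC y Y -> is_lim_seqC t (RtoC 0) ->
  (forall K, Cminus (Cmult (RtoC a) (x K)) (y K) = Cmult (RtoC b) (Cminus p (t K))) ->
  Cminus (Cmult (RtoC a) X) Y = Cmult (RtoC b) p.
Proof.
  intros [HxRe HxIm] [HyRe HyIm] [HtRe HtIm] H.
  assert (ERe : a * Re X - Re Y = b * Re p).
  { apply (is_lim_seq_relation _ _ _ _ _ _ a b HxRe HyRe HtRe).
    intros K. pose proof (f_equal Re (H K)) as E. unfold Re in *. simpl in E. lra. }
  assert (EIm : a * Im X - Im Y = b * Im p).
  { apply (is_lim_seq_relation _ _ _ _ _ _ a b HxIm HyIm HtIm).
    intros K. pose proof (f_equal Im (H K)) as E. unfold Im in *. simpl in E. lra. }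
  apply injective_projections; unfold Re, Im in *; simpl; lra.
Qed.

Lemma Lpow_app j (f : seqC) n : app (opow Lop j) f n = f (n + j)%nat.
Proof.
  revert n. induction j as [|j IH]; intros n; simpl.
  - now rewrite Nat.add_0_r.
  - rewrite IH. f_equal. lia.
Qed.

Definition Tm (m : nat) : op := osub idop (opow Lop m).

Lemma Tm_pow_S m k (f : seqC) n :
  app (opow (Tm m) (S k)) f n =
  Cminus (app (opow (Tm m) k) f n) (app (opow (Tm m) k) f (n + m)%nat).
Proof. simpl. now rewrite Lpow_app. Qed.

Lemma Tm_pow_Nop m k (f : seqC) n :
  app (opow (Tm m) (S k)) (app Nop f) n =
  Cminus (Cmult (RtoC (INR n)) (app (opow (Tm m) (S k)) f n))
         (Cmult (RtoC (INR (S k) * INR m))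
            (Cminus (app (opow (Tm m) k) f n) (app (opow (Tm m) (S k)) f n))).
Proof.
  revert n. induction k as [|k IH]; intros n.
  - rewrite !Tm_pow_S. simpl. rewrite plus_INR, RtoC_plus, RtoC_mult. ring.
  - rewrite (Tm_pow_S m (S k) (app Nop f) n), !IH, (Tm_pow_S m (S k) f n),
      (Tm_pow_S m k f n), (Tm_pow_S m k f (n + m)).
    rewrite plus_INR, !S_INR, !RtoC_plus, !RtoC_mult, !RtoC_plus. ring.
Qed.

Lemma logpsum_0 (A : op) (f : seqC) n : logpsum A f 0 n = RtoC 0.
Proof. apply injective_projections; simpl; ring. Qed.

Lemma logpsum_S (A : op) (f : seqC) K n :
  logpsum A f (S K) n =
  Cplus (logpsum A f K n)
        (Cmult (RtoC (/ INR (S K))) (app (opow (osub idop A) (S K)) f n)).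
Proof. reflexivity. Qed.

Lemma logpsum_Nop_comm m (f : seqC) K n :
  Cminus (Cmult (RtoC (INR n)) (logpsum (opow Lop m) f K n))
         (logpsum (opow Lop m) (app Nop f) K n)
  = Cmult (RtoC (INR m)) (Cminus (f n) (app (opow (Tm m) K) f n)).
Proof.
  induction K as [|K IH].
  - rewrite !logpsum_0. simpl. ring.
  - rewrite !logpsum_S. fold (Tm m). rewrite Tm_pow_Nop.
    assert (HK : INR (S K) <> 0) by (apply not_0_INR; lia).
    rewrite (RtoC_inv _ HK), RtoC_mult.
    assert (HKC : RtoC (INR (S K)) <> RtoC 0) by (intros E; apply HK; now injection E).
    revert IH. generalize (logpsum (opow Lop m) f K n) (logpsum (opow Lop m) (app Nop f) K n).
    intros s1 s2 IH.
    transitivity (Cplus (Cminus (Cmult (RtoC (INR n)) s1) s2)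
      (Cmult (RtoC (INR m)) (Cminus (app (opow (Tm m) K) f n) (app (opow (Tm m) (S K)) f n)))).
    + field. exact HKC.
    + rewrite IH. ring.
Qed.

Lemma log_Lpow_Nop_comm m (phi g1 g2 : seqC) n :
  l2conv (fun k => app (opow (Tm m) k) phi) (fun _ => RtoC 0) ->
  l2conv (logpsum (opow Lop m) phi) g1 ->
  l2conv (logpsum (opow Lop m) (app Nop phi)) g2 ->
  Cminus (Cmult (RtoC (INR n)) (g1 n)) (g2 n) = Cmult (RtoC (INR m)) (phi n).
Proof.
  intros HT H1 H2.
  apply (is_lim_seqC_relation (fun K => logpsum (opow Lop m) phi K n)
           (fun K => logpsum (opow Lop m) (app Nop phi) K n)
           (fun K => app (opow (Tm m) K) phi n));
    [exact (l2conv_coord _ _ n H1) | exact (l2conv_coord _ _ n H2)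
    | exact (l2conv_coord _ _ n HT) | intros K; apply logpsum_Nop_comm].
Qed.

Lemma comm_Nop_log_Lpow (m : nat) (hm : (1 <= m)%nat) (phi : seqC) :
  Sm m phi ->
  dom (comm Nop (oscal (Cdiv Ci (RtoC (INR m))) (logop (opow Lop m)))) phi /\
  forall n : nat,
    app (comm Nop (oscal (Cdiv Ci (RtoC (INR m))) (logop (opow Lop m)))) phi n
    = Cmult (Copp Ci) (phi n).
Proof.
  intros [[_ HT] [[Hlog [HlogL2 HNlogL2]] [HNphi HlogN]]].
  set (c := Cdiv Ci (RtoC (INR m))).
  split.
  - split; split; [exact Hlog | split | exact HNphi | exact HlogN].
    + now apply l2_scal.
    + apply l2_ext with
        (fun n => Cmult c (Cmult (RtoC (INR n)) (app (logop (opow Lop m)) phi n))).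
      * intros n. simpl. ring.
      * now apply l2_scal.
  - intros n.
    destruct Hlog as [_ [g1 Hg1]]. destruct HlogN as [_ [g2 Hg2]].
    pose proof (log_Lpow_Nop_comm m phi g1 g2 n HT Hg1 Hg2) as E.
    change (Cminus (Cmult (RtoC (INR n)) (Cmult c (app (logop (opow Lop m)) phi n)))
                   (Cmult c (app (logop (opow Lop m)) (app Nop phi) n))
            = Cmult (Copp Ci) (phi n)).
    rewrite (logop_app _ _ _ n Hg1), (logop_app _ _ _ n Hg2).
    assert (Hm : RtoC (INR m) <> RtoC 0)
      by (intros H; injection H; apply not_0_INR; lia).
    replace (g2 n) with (Cminus (Cmult (RtoC (INR n)) (g1 n)) (Cmult (RtoC (INR m)) (phi n)))
      by (rewrite <- E; ring).
    unfold c. field. exact Hm.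
Qed.

Definition preserves_l2 (A : op) : Prop := forall f, l2 f -> dom A f /\ l2 (app A f).

Lemma preserves_l2_Lop : preserves_l2 Lop.
Proof. intros f Hf. split; [exact Hf|]. exact (proj1 (ex_series_incr_1 _) Hf). Qed.

Lemma preserves_l2_opow (A : op) k : preserves_l2 A -> preserves_l2 (opow A k).
Proof.
  intros HA. induction k as [|k IH]; intros f Hf; [now split|].
  destruct (IH f Hf) as [Hdom Hl2]. destruct (HA _ Hl2).
  now split; [split|].
Qed.

Definition geom (q : R) : seqC := fun n => RtoC (q ^ n).

Lemma l2_geom q : 0 <= q < 1 -> l2 (geom q).
Proof.
  intros Hq. apply ex_series_extR with (fun n => (q ^ 2) ^ n).
  - intros n. unfold geom. rewrite Cmod_R, pow2_abs, <- !pow_mult. f_equal. lia.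
  - apply ex_series_geom. rewrite Rabs_pos_eq by apply pow2_ge_0. simpl. nra.
Qed.

Lemma INR_le_pow2 n : INR n <= 2 ^ n.
Proof.
  induction n as [|n IH]; [simpl; lra|].
  rewrite S_INR. simpl. pose proof (pow_R1_Rle 2 n ltac:(lra)). lra.
Qed.

(* Uses n <= 2^n, whence the bound q < 1/2. *)
Lemma l2_Nop_geom q : 0 <= q < / 2 -> l2 (app Nop (geom q)).
Proof.
  intros Hq.
  apply ex_series_le_nonneg with (fun n => ((2 * q) ^ 2) ^ n).
  - intros n. split; [apply pow2_ge_0|].
    change (Cmod (Cmult (RtoC (INR n)) (RtoC (q ^ n))) ^ 2 <= ((2 * q) ^ 2) ^ n).
    rewrite <- RtoC_mult, Cmod_R, pow2_abs.
    replace (((2 * q) ^ 2) ^ n) with ((2 ^ n * q ^ n) ^ 2)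
      by (rewrite <- Rpow_mult_distr, <- !pow_mult; f_equal; lia).
    apply pow_incr. split.
    + apply Rmult_le_pos; [apply pos_INR | now apply pow_le].
    + apply Rmult_le_compat_r; [now apply pow_le | apply INR_le_pow2].
  - apply ex_series_geom. rewrite Rabs_pos_eq by apply pow2_ge_0. simpl. nra.
Qed.

Lemma geom_shift q m n : geom q (n + m)%nat = Cmult (RtoC (q ^ m)) (geom q n).
Proof. unfold geom. rewrite pow_add, RtoC_mult. ring. Qed.

Lemma Tm_pow_eigen m (c : R) (f : seqC) :
  (forall n, f (n + m)%nat = Cmult (RtoC c) (f n)) ->
  forall k n, app (opow (Tm m) k) f n = Cmult (RtoC ((1 - c) ^ k)) (f n).
Proof.
  intros Hf k. induction k as [|k IH]; intros n.
  - simpl. now rewrite Cmult_1_l.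
  - rewrite Tm_pow_S, !IH, Hf. simpl. rewrite RtoC_mult, RtoC_minus. ring.
Qed.

Definition log_coef (mu : R) (k : nat) : R :=
  match k with O => 0 | S _ => mu ^ k / INR k end.

Lemma ex_series_log_coef mu : 0 <= mu < 1 -> ex_series (log_coef mu).
Proof.
  intros Hmu. apply ex_series_le_nonneg with (fun k => mu ^ k).
  - intros [|j]; [simpl; lra|].
    assert (Hj : 1 <= INR (S j)) by (apply (le_INR 1); lia).
    pose proof (pow_le mu (S j) ltac:(lra)).
    change (log_coef mu (S j)) with (mu ^ S j / INR (S j)). split.
    + apply Rmult_le_pos; [lra | apply Rlt_le, Rinv_0_lt_compat; lra].
    + apply Rmult_le_reg_r with (INR (S j)); [lra|].
      unfold Rdiv. rewrite Rmult_assoc, Rinv_l by lra. nra.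
  - apply ex_series_geom. rewrite Rabs_pos_eq; lra.
Qed.

Section Eigenvector.

Variables (m : nat) (c : R) (f : seqC).
Hypothesis f_eigen : forall n, f (n + m)%nat = Cmult (RtoC c) (f n).
Hypothesis c_range : 0 < c <= 1.
Hypotheses (f_l2 : l2 f) (Nf_l2 : l2 (app Nop f)).

Lemma logpsum_eigen K n :
  logpsum (opow Lop m) f K n = Cmult (RtoC (sum_n (log_coef (1 - c)) K)) (f n).
Proof.
  induction K as [|K IH].
  - rewrite logpsum_0, sum_O. simpl. ring.
  - rewrite logpsum_S. fold (Tm m).
    rewrite IH, (Tm_pow_eigen m c f f_eigen), sum_Sn.
    change (plus ?x ?y) with (x + y).
    change (log_coef (1 - c) (S K)) with ((1 - c) ^ S K / INR (S K)).
    unfold Rdiv. rewrite RtoC_plus, !RtoC_mult. ring.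
Qed.

Lemma logpsum_Nop_eigen K n :
  logpsum (opow Lop m) (app Nop f) K n =
  Cplus (Cmult (RtoC (sum_n (log_coef (1 - c)) K)) (app Nop f n))
        (Cmult (RtoC (- INR m * (1 - (1 - c) ^ K))) (f n)).
Proof.
  pose proof (logpsum_Nop_comm m f K n) as E.
  rewrite logpsum_eigen, (Tm_pow_eigen m c f f_eigen) in E.
  change (app Nop f n) with (Cmult (RtoC (INR n)) (f n)).
  rewrite RtoC_mult, RtoC_opp, RtoC_minus.
  set (s := logpsum (opow Lop m) (app Nop f) K n) in *.
  replace s with (Cminus (Cmult (RtoC (INR n))
                    (Cmult (RtoC (sum_n (log_coef (1 - c)) K)) (f n)))
                  (Cmult (RtoC (INR m)) (Cminus (f n) (Cmult (RtoC ((1 - c) ^ K)) (f n)))))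
    by (rewrite <- E; ring).
  ring.
Qed.

Let mu_range : 0 <= 1 - c < 1.
Proof. lra. Qed.

Let mu_abs : Rabs (1 - c) < 1.
Proof. rewrite Rabs_pos_eq; lra. Qed.

Let sum_log_coef_cvg : is_lim_seq (sum_n (log_coef (1 - c))) (Series (log_coef (1 - c))).
Proof. apply Series_correct, ex_series_log_coef, mu_range. Qed.

Lemma eigen_in_l2m : l2m m f.
Proof.
  split; [exact f_l2|].
  apply (l2conv_comb2 f f (fun k => (1 - c) ^ k) (fun _ => 0) 0 0); auto.
  - now apply is_lim_seq_geom.
  - apply is_lim_seq_const.
  - intros K n. rewrite (Tm_pow_eigen m c f f_eigen). ring.
  - intros n. ring.
Qed.

Lemma logpsum_eigen_l2conv :
  l2conv (logpsum (opow Lop m) f) (fun n => Cmult (RtoC (Series (log_coef (1 - c)))) (f n)).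
Proof.
  apply (l2conv_comb2 f f _ (fun _ => 0) _ 0 _ _ f_l2 f_l2 sum_log_coef_cvg).
  - apply is_lim_seq_const.
  - intros K n. rewrite logpsum_eigen. ring.
  - intros n. ring.
Qed.

Lemma logpsum_Nop_eigen_l2conv :
  exists g, l2conv (logpsum (opow Lop m) (app Nop f)) g.
Proof.
  eexists. apply (l2conv_comb2 (app Nop f) f _ (fun K => - INR m * (1 - (1 - c) ^ K))
                   _ (- INR m * (1 - 0)) _ _ Nf_l2 f_l2 sum_log_coef_cvg).
  - apply is_lim_seq_mult', is_lim_seq_minus'; [apply is_lim_seq_const..|].
    now apply is_lim_seq_geom.
  - intros K n. apply logpsum_Nop_eigen.
  - reflexivity.
Qed.

Lemma eigen_in_Sm : Sm m f.
Proof.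
  pose proof logpsum_eigen_l2conv as Hlog.
  assert (Hpow : forall g, l2 g -> forall k, dom (opow (opow Lop m) k) g)
    by (intros g Hg k; apply (preserves_l2_opow _ k); [apply preserves_l2_opow, preserves_l2_Lop | exact Hg]).
  set (a := Series (log_coef (1 - c))) in Hlog.
  split; [exact eigen_in_l2m | split].
  - split; [split; [now apply Hpow | eexists; exact Hlog]|].
    split; [apply (l2_ext (fun n => Cmult (RtoC (- a)) (f n))) |
            apply (l2_ext (fun n => Cmult (RtoC (- a)) (app Nop f n)))];
      try (intros n; rewrite (logop_app _ _ _ n Hlog), RtoC_opp; simpl; ring);
      now apply l2_scal.
  - split; [now split | split; [now apply Hpow | exact logpsum_Nop_eigen_l2conv]].
Qed.

End Eigenvector.

Lemma geom_in_Sm m q : (1 <= m)%nat -> 0 < q < / 2 -> Sm m (geom q).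
Proof.
  intros hm hq. apply (eigen_in_Sm m (q ^ m)).
  - apply geom_shift.
  - pose proof (pow_lt q m ltac:(lra)). pose proof (pow_lt_1_compat q m ltac:(lra) hm). lra.
  - apply l2_geom. lra.
  - apply l2_Nop_geom. lra.
Qed.

Lemma csum_ext d (f g : nat -> C) :
  (forall j, (j < d)%nat -> f j = g j) -> csum d f = csum d g.
Proof.
  induction d as [|d IH]; intros H; simpl; [reflexivity|].
  rewrite IH, H; [reflexivity | lia |]. intros j Hj. apply H. lia.
Qed.

Lemma csum_minus d (f g : nat -> C) :
  csum d (fun j => Cminus (f j) (g j)) = Cminus (csum d f) (csum d g).
Proof. induction d as [|d IH]; simpl; [ring|]. rewrite IH. ring. Qed.

Lemma csum_mult_l d (k : C) (f : nat -> C) :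
  csum d (fun j => Cmult k (f j)) = Cmult k (csum d f).
Proof. induction d as [|d IH]; simpl; [ring|]. rewrite IH. ring. Qed.

Lemma csum_powers_drop_last d (c : nat -> C) (lam : nat -> R) n :
  Cminus (csum (S d) (fun j => Cmult (c j) (RtoC (lam j ^ S n))))
         (Cmult (RtoC (lam d)) (csum (S d) (fun j => Cmult (c j) (RtoC (lam j ^ n)))))
  = csum d (fun j => Cmult (Cmult (c j) (RtoC (lam j - lam d))) (RtoC (lam j ^ n))).
Proof.
  rewrite (csum_ext d _ (fun j => Cminus (Cmult (c j) (RtoC (lam j ^ S n)))
             (Cmult (RtoC (lam d)) (Cmult (c j) (RtoC (lam j ^ n)))))).
  - rewrite csum_minus, csum_mult_l. simpl. rewrite !RtoC_mult. ring.
  - intros j _. simpl. rewrite !RtoC_mult, RtoC_minus. ring.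
Qed.

Lemma csum_powers_indep d : forall (c : nat -> C) (lam : nat -> R),
  (forall i j, (i < d)%nat -> (j < d)%nat -> lam i = lam j -> i = j) ->
  (forall n, csum d (fun j => Cmult (c j) (RtoC (lam j ^ n))) = RtoC 0) ->
  forall j, (j < d)%nat -> c j = RtoC 0.
Proof.
  induction d as [|d IH]; intros c lam Hinj H j Hj; [lia|].
  assert (Hlow : forall i, (i < d)%nat -> c i = RtoC 0).
  { intros i Hi.
    assert (Hci : Cmult (c i) (RtoC (lam i - lam d)) = RtoC 0).
    { apply (IH (fun j => Cmult (c j) (RtoC (lam j - lam d))) lam); [|intros n|exact Hi].
      - intros i' j' Hi' Hj'. apply Hinj; lia.
      - rewrite <- csum_powers_drop_last, !H. ring. }
    assert (Hne : RtoC (lam i - lam d) <> RtoC 0).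
    { intros E. injection E. intros E'.
      assert (i = d) by (apply Hinj; lia || lra). lia. }
    transitivity (Cmult (Cmult (c i) (RtoC (lam i - lam d))) (Cinv (RtoC (lam i - lam d)))).
    - field. exact Hne.
    - rewrite Hci. ring. }
  destruct (Nat.eq_dec j d) as [->|Hjd]; [|apply Hlow; lia].
  pose proof (H 0%nat) as E. simpl csum in E.
  rewrite (csum_ext d _ (fun j => Cmult (RtoC 0) (RtoC (lam j ^ 0)))) in E
    by (intros i Hi; now rewrite Hlow).
  rewrite csum_mult_l in E. rewrite <- E. ring.
Qed.

Theorem mainTheorem16 (m : nat) (hm : (1 <= m)%nat) :
  (forall phi : seqC, Sm m phi ->
     dom (comm Nop (oscal (Cdiv Ci (RtoC (INR m))) (logop (opow Lop m)))) phi /\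
     forall n : nat,
       app (comm Nop (oscal (Cdiv Ci (RtoC (INR m))) (logop (opow Lop m)))) phi n
       = Cmult (Copp Ci) (phi n))
  /\ infinite_dimensional (Sm m).
Proof.
  split; [intros phi; now apply comm_Nop_log_Lpow|].
  intros d. exists (fun j => geom (/ (INR j + 3))). split.
  - intros j _. apply geom_in_Sm; [exact hm|].
    pose proof (pos_INR j). split.
    + apply Rinv_0_lt_compat. lra.
    + apply Rinv_lt_contravar; nra.
  - intros c Hc. apply (csum_powers_indep d c (fun j => / (INR j + 3))); [|exact Hc].
    intros i j _ _ E. apply INR_eq.
    pose proof (pos_INR i). pose proof (pos_INR j).
    apply (f_equal Rinv) in E. rewrite !Rinv_inv in E. lra.
Qed.
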